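(* Let $G_1=(V_1,E_1)$ and $G_2=(V_2,E_2)$ be finite, simple, connected graphs. The following are equivalent: (i) $G_1$ and $G_2$ are reflective; (ii) the cartesian product $G_1\times G_2$ is reflective.
   Context: $d$ is the combinatorial distance. For adjacent $x\sim y$ in a graph with vertex set $V$ let $V_x^y=\{v: d(v,x)<d(v,y)\}$, $V^{xy}=\{v:d(v,x)=d(v,y)\}$. A reflection from $x$ to $y$ is a graph automorphism $\phi$ with $\phi\circ\phi=\mathrm{id}$, $\phi(x)=y$, such that the edges between $V_x^y$ and $V_y^x$ are exactly $\{\{x',\phi(x')\}:x'\in V_x^y\}$ and $\phi$ fixes $V^{xy}$ pointwise. A graph is reflective if every edge admits a reflection. Cartesian product: vertex set $V_1\times V_2$, $(a,b)\sim(a',b')$ iff ($a=a'$, $b\sim b'$) or ($a\sim a'$, $b=b'$). *)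

From mathcomp Require Import all_boot.
Set Implicit Arguments. Unset Strict Implicit. Unset Printing Implicit Defensive.

Section Graphs.
Variable T : finType.
Variable e : rel T.

Definition simple_graph : Prop := symmetric e /\ irreflexive e.

Definition connected_graph : Prop := forall x y : T, connect e x y.

Fixpoint walkn (n : nat) (x y : T) : bool :=
  match n with
  | 0 => x == y
  | n'.+1 => [exists z, e x z && walkn n' z y]
  end.

(* combinatorial distance: least n with a walk of length n from x to y
   (any shortest walk has length < #|T|; value #|T| if unreachable,
   which never happens in a connected graph). *)
Definition gdist (x y : T) : nat :=
  find (fun n => walkn n x y) (iota 0 #|T|).

Definition Vside (x y : T) : pred T := fun v => gdist v x < gdist v y.
Definition Vmid (x y : T) : pred T := fun v => gdist v x == gdist v y.

Definition automorphism (phi : T -> T) : Prop :=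
  bijective phi /\ forall a b, e (phi a) (phi b) = e a b.

Definition reflection (x y : T) (phi : T -> T) : Prop :=
  [/\ automorphism phi /\ (forall v, phi (phi v) = v),
      phi x = y,
      (* the edges between V_x^y and V_y^x are exactly {x', phi x'}, x' in V_x^y *)
      (forall a, Vside x y a -> Vside y x (phi a) /\ e a (phi a)),
      (forall a b, Vside x y a -> Vside y x b -> e a b -> b = phi a)
    & forall v, Vmid x y v -> phi v = v].

Definition reflective : Prop :=
  forall x y, e x y -> exists phi, reflection x y phi.

End Graphs.

Definition cart_rel (T1 T2 : finType) (e1 : rel T1) (e2 : rel T2)
  : rel (T1 * T2)%type :=
  fun u v => ((u.1 == v.1) && e2 u.2 v.2) || (e1 u.1 v.1 && (u.2 == v.2)).

(* Distances in G1 x G2 add up coordinatewise, so for an edge (a,b)(a',b) the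
   two sides are V_a^a' x V2 and V_a'^a x V2 and the middle is V^aa' x V2;
   hence a reflection phi of G1 from a to a' gives the reflection phi x id of
   the product.  Conversely, a reflection Phi of the product from (a,b) to
   (a',b) preserves second coordinates: a vertex p on one side is joined to
   Phi p on the other, and such an edge cannot run in the G2-direction because
   its endpoints would share their first coordinate; the other side is the
   image of the first one, and the middle is fixed.  So Phi restricts to the
   fibre G1 x {b}, which is a copy of G1.  Edges in the G2-direction are
   handled by swapping the factors. *)
From mathcomp Require Import all_boot.
Set Implicit Arguments. Unset Strict Implicit. Unset Printing Implicit Defensive.

Section Walks.

Variables (T : finType) (e : rel T).

Lemma walknP n x y :
  reflect (exists p, [/\ path e x p, last x p = y & size p = n]) (walkn e n x y).
Proof.
apply: (iffP idP).
- elim: n x => [|n IH] x /=; first by move/eqP=> <-; exists [::].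
  case/existsP=> z /andP[exz /IH[p [pp <- <-]]].
  by exists (z :: p); rewrite /= exz pp.
- case=> p [pp <- <-] {y n}; elim: p x pp => [|z p IH] x /=; first by rewrite eqxx.
  by case/andP=> exz pp; apply/existsP; exists z; rewrite exz IH.
Qed.

Lemma walkn_shorten n x y :
  walkn e n x y -> exists m, [/\ m < #|T|, m <= n & walkn e m x y].
Proof.
case/walknP=> p [pp <- <-]; case: (shortenP pp) => p' pp' up' sub'.
exists (size p'); split; last by apply/walknP; exists p'.
- by have := max_card (mem (x :: p')); rewrite (card_uniqP up').
- by apply: uniq_leq_size sub'; case/andP: up'.
Qed.

Lemma gdist_walkn n x y :
  walkn e n x y -> gdist e x y <= n /\ walkn e (gdist e x y) x y.
Proof.
case/walkn_shorten=> m [mT mn wm].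
have has_walk : has (fun k => walkn e k x y) (iota 0 #|T|).
  by apply/hasP; exists m; rewrite ?mem_iota.
have dT : gdist e x y < #|T| by rewrite -[X in _ < X](size_iota 0) -has_find.
split; last by have := nth_find 0 has_walk; rewrite nth_iota.
apply: leq_trans mn; rewrite leqNgt; apply/negP => /(before_find 0).
by rewrite nth_iota // wm.
Qed.

Lemma walkn_gdist x y : connected_graph e -> walkn e (gdist e x y) x y.
Proof.
move=> /(_ x y) /connectP[p pp lp].
have : walkn e (size p) x y by apply/walknP; exists p.
by case/gdist_walkn.
Qed.

Lemma Vside_asym x y v : Vside e x y v -> ~~ Vside e y x v.
Proof. by rewrite /Vside => /ltnW; rewrite leqNgt. Qed.

End Walks.

Section Transport.

Variables (T T' : finType) (e : rel T) (e' : rel T') (f : T -> T') (g : T' -> T).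
Hypotheses (fK : cancel f g) (gK : cancel g f).
Hypothesis f_edge : forall u v, e' (f u) (f v) = e u v.

Lemma walkn_transport n u v : walkn e' n (f u) (f v) = walkn e n u v.
Proof.
elim: n u v => [|n IH] u v /=; first exact: (inj_eq (can_inj fK)).
apply/existsP/existsP => [[z /andP[uz zv]]|[z /andP[uz zv]]].
  by exists (g z); rewrite -f_edge -IH gK uz zv.
by exists (f z); rewrite f_edge IH uz zv.
Qed.

Lemma gdist_transport u v : gdist e' (f u) (f v) = gdist e u v.
Proof.
rewrite /gdist; have -> : #|T'| = #|T| by apply/esym/bij_eq_card; exists g.
by apply: eq_find => n; rewrite walkn_transport.
Qed.

Lemma reflection_transport x y phi :
  reflection e x y phi -> reflection e' (f x) (f y) (f \o phi \o g).
Proof.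
move=> [[[_ phi_edge] phiK] phixy side edge mid].
have Vs a b c : Vside e' (f a) (f b) c = Vside e a b (g c).
  by rewrite /Vside -{1 2}(gK c) !gdist_transport.
have Vm a b c : Vmid e' (f a) (f b) c = Vmid e a b (g c).
  by rewrite /Vmid -{1 2}(gK c) !gdist_transport.
have invK : involutive (f \o phi \o g) by move=> v /=; rewrite fK phiK gK.
split=> /=.
- split=> //; split; first exact: inv_bij.
  by move=> a b /=; rewrite f_edge phi_edge -f_edge !gK.
- by rewrite fK phixy.
- move=> a; rewrite Vs => /side[phia ea]; rewrite Vs fK; split=> //.
  by rewrite -[a in e' a _]gK f_edge.
- move=> a b; rewrite !Vs -[a in e' a _]gK -[b in e' _ b]gK f_edge => ha hb hab.
  by rewrite -(edge _ _ ha hb hab) gK.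
- by move=> v; rewrite Vm => /mid ->; rewrite gK.
Qed.

End Transport.

Lemma reflection_Vside_swap (T : finType) (e : rel T) x y phi v :
  reflection e x y phi -> Vside e y x v -> Vside e x y (phi v).
Proof.
move=> [[[_ phi_edge] phiK] phixy _ _ _].
have phiyx : phi y = x by rewrite -phixy phiK.
have gd := gdist_transport phiK phiK phi_edge.
by rewrite /Vside -(gd v y) -(gd v x) phixy phiyx.
Qed.

Section CartesianProduct.

Variables (T1 T2 : finType) (e1 : rel T1) (e2 : rel T2).
Local Notation e := (cart_rel e1 e2).

Lemma walkn_cart n1 n2 a a' b b' :
  walkn e1 n1 a a' -> walkn e2 n2 b b' -> walkn e (n1 + n2) (a, b) (a', b').
Proof.
move=> w1 w2; elim: n1 a w1 => [|n IH] a /=.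
  move/eqP=> ->; elim: n2 b w2 => [|n IH] b /=; first by move/eqP->.
  case/existsP=> z /andP[bz zb']; apply/existsP; exists (a', z).
  by rewrite /cart_rel /= eqxx bz IH.
case/existsP=> z /andP[az za']; apply/existsP; exists (z, b).
by rewrite /cart_rel /= eqxx az orbT IH.
Qed.

Lemma walkn_cart_split n p q :
  walkn e n p q ->
  exists n1 n2, [/\ n1 + n2 = n, walkn e1 n1 p.1 q.1 & walkn e2 n2 p.2 q.2].
Proof.
elim: n p => [|n IH] p /=.
  by move/eqP->; exists 0, 0; split=> //=; rewrite eqxx.
case/existsP=> z /andP[pz /IH[n1 [n2 [<- w1 w2]]]].
case/orP: pz => /andP[].
- move/eqP=> -> p2z; exists n1, n2.+1; rewrite addnS; split=> //.
  by apply/existsP; exists z.2; rewrite p2z.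
- move=> p1z /eqP->; exists n1.+1, n2; rewrite addSn; split=> //.
  by apply/existsP; exists z.1; rewrite p1z.
Qed.

Lemma cart_edge_across a a' p q :
  Vside e1 a a' p.1 -> Vside e1 a' a q.1 -> e p q -> e1 p.1 q.1 /\ p.2 = q.2.
Proof.
move=> hp hq /orP[] /andP[]; last by move=> p1q1 /eqP.
by move/eqP=> p1q1; move: hq; rewrite -p1q1 (negbTE (Vside_asym hp)).
Qed.

Hypotheses (conn1 : connected_graph e1) (conn2 : connected_graph e2).

Lemma gdist_cart p q : gdist e p q = gdist e1 p.1 q.1 + gdist e2 p.2 q.2.
Proof.
case: p q => [a b] [a' b']; apply/eqP; rewrite eqn_leq.
have w12 := walkn_cart (walkn_gdist a a' conn1) (walkn_gdist b b' conn2).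
have [-> w] := gdist_walkn w12.
have [n1 [n2 [<- w1 w2]]] := walkn_cart_split w.
by rewrite leq_add ?(gdist_walkn w1).1 ?(gdist_walkn w2).1.
Qed.

Lemma Vside_cart_l a a' b p : Vside e (a, b) (a', b) p = Vside e1 a a' p.1.
Proof. by rewrite /Vside !gdist_cart ltn_add2r. Qed.

Lemma Vmid_cart_l a a' b p : Vmid e (a, b) (a', b) p = Vmid e1 a a' p.1.
Proof. by rewrite /Vmid !gdist_cart eqn_add2r. Qed.

Lemma reflection_cart_l a a' b phi :
  reflection e1 a a' phi -> reflection e (a, b) (a', b) (fun p => (phi p.1, p.2)).
Proof.
move=> [[[_ phi_edge] phiK] phiaa' side edge mid].
have invK : involutive (fun p : T1 * T2 => (phi p.1, p.2)).
  by case=> u v /=; rewrite phiK.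
split=> /=.
- split=> //; split; first exact: inv_bij.
  by case=> u v [u' v']; rewrite /cart_rel /= phi_edge (inj_eq (inv_inj phiK)).
- by rewrite phiaa'.
- case=> u v; rewrite !Vside_cart_l /= => /side[-> uphiu]; split=> //.
  by rewrite /cart_rel /= uphiu eqxx orbT.
- case=> u v [u' v']; rewrite !Vside_cart_l /= => hu hu' uu'.
  have [/= uu'1 <-] := cart_edge_across (p := (u, v)) (q := (u', v')) hu hu' uu'.
  by rewrite (edge _ _ hu hu' uu'1).
- by case=> u v; rewrite Vmid_cart_l /= => /mid ->.
Qed.

Lemma reflection_cart_snd a a' b Phi :
  reflection e (a, b) (a', b) Phi -> forall p, (Phi p).2 = p.2.
Proof.
move=> hPhi; have [[_ PhiK] _ side _ mid] := hPhi.
have fix_side q : Vside e1 a a' q.1 -> (Phi q).2 = q.2.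
  move=> hq; have [hPq qPq] := side q (etrans (Vside_cart_l _ _ _ _) hq).
  by rewrite Vside_cart_l in hPq; have [_ <-] := cart_edge_across hq hPq qPq.
move=> p; case: (ltngtP (gdist e1 p.1 a) (gdist e1 p.1 a')) => hp.
- exact: fix_side.
- have : Vside e1 a a' (Phi p).1.
    by rewrite -(Vside_cart_l _ _ b) (reflection_Vside_swap hPhi) ?Vside_cart_l.
  by move/fix_side; rewrite PhiK.
- by rewrite mid // Vmid_cart_l /Vmid hp.
Qed.

Lemma reflection_cart_restrict_l a a' b Phi :
  irreflexive e2 -> reflection e (a, b) (a', b) Phi ->
  reflection e1 a a' (fun u => (Phi (u, b)).1).
Proof.
move=> irr2 hPhi; have [[[_ Phi_edge] PhiK] Phiaa' side edge mid] := hPhi.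
have Phi_fibre u : Phi (u, b) = ((Phi (u, b)).1, b).
  by rewrite [LHS]surjective_pairing (reflection_cart_snd hPhi).
have fibre_edge u v : e (u, b) (v, b) = e1 u v.
  by rewrite /cart_rel /= irr2 andbF eqxx andbT.
have invK : involutive (fun u => (Phi (u, b)).1).
  by move=> u; rewrite -Phi_fibre PhiK.
split=> /=.
- split=> //; split; first exact: inv_bij.
  by move=> u v; rewrite -fibre_edge -!Phi_fibre Phi_edge fibre_edge.
- by rewrite Phiaa'.
- move=> u hu; have := side (u, b).
  by rewrite Phi_fibre !Vside_cart_l fibre_edge => /(_ hu).
- move=> u w hu hw; rewrite -fibre_edge => uw.
  by have := edge (u, b) (w, b); rewrite !Vside_cart_l Phi_fibre => /(_ hu hw uw) [].
- by move=> u hu; rewrite mid // Vmid_cart_l.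
Qed.

Lemma reflective_of_cart_l :
  irreflexive e2 -> 0 < #|T2| -> reflective e -> reflective e1.
Proof.
move=> irr2 /card_gt0P[b _] refl a a' aa'.
have [|Phi hPhi] := refl (a, b) (a', b); first by rewrite /cart_rel /= aa' eqxx orbT.
by exists (fun u => (Phi (u, b)).1); exact: reflection_cart_restrict_l.
Qed.

End CartesianProduct.

Section CartesianSwap.

Variables (T1 T2 : finType) (e1 : rel T1) (e2 : rel T2).

Lemma cart_rel_swap u v :
  cart_rel e2 e1 (swap_pair u) (swap_pair v) = cart_rel e1 e2 u v.
Proof. by rewrite /cart_rel /= orbC andbC [X in _ || X]andbC. Qed.

Lemma reflection_cart_swap x y Phi :
  reflection (cart_rel e1 e2) x y Phi ->
  reflection (cart_rel e2 e1) (swap_pair x) (swap_pair y) (swap_pair \o Phi \o swap_pair).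
Proof. exact: reflection_transport swap_pairK swap_pairK cart_rel_swap x y Phi. Qed.

Lemma reflective_cart_swap : reflective (cart_rel e1 e2) -> reflective (cart_rel e2 e1).
Proof.
move=> refl u v; rewrite -[u]swap_pairK -[v]swap_pairK cart_rel_swap => /refl[Phi].
by exists (swap_pair \o Phi \o swap_pair); exact: reflection_cart_swap.
Qed.

End CartesianSwap.

Section CartesianReflective.

Variables (T1 T2 : finType) (e1 : rel T1) (e2 : rel T2).
Hypotheses (conn1 : connected_graph e1) (conn2 : connected_graph e2).

Lemma reflection_cart_r a b b' psi :
  reflection e2 b b' psi ->
  reflection (cart_rel e1 e2) (a, b) (a, b') (fun p => (p.1, psi p.2)).
Proof.
move=> hpsi; exact: reflection_cart_swap (reflection_cart_l conn2 conn1 a hpsi).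
Qed.

Lemma reflective_cart : reflective e1 -> reflective e2 -> reflective (cart_rel e1 e2).
Proof.
move=> refl1 refl2 [a b] [a' b'] /orP[] /andP[] /=.
- move/eqP=> <- /refl2[psi hpsi].
  by exists (fun p => (p.1, psi p.2)); exact: reflection_cart_r.
- move=> /refl1[phi hphi] /eqP<-.
  by exists (fun p => (phi p.1, p.2)); exact: reflection_cart_l.
Qed.

End CartesianReflective.

Theorem lemma2p8 (T1 T2 : finType) (e1 : rel T1) (e2 : rel T2) :
  simple_graph e1 -> simple_graph e2 ->
  0 < #|T1| -> 0 < #|T2| ->
  connected_graph e1 -> connected_graph e2 ->
  (reflective e1 /\ reflective e2) <-> reflective (cart_rel e1 e2).
Proof.
move=> [_ irr1] [_ irr2] T1_gt0 T2_gt0 conn1 conn2.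
split=> [[refl1 refl2] | refl]; first exact: reflective_cart.
split; first exact: reflective_of_cart_l conn1 conn2 irr2 T2_gt0 refl.
exact: reflective_of_cart_l conn2 conn1 irr1 T1_gt0 (reflective_cart_swap refl).
Qed.
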